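(* For every integer $n\ge1$, \[ (3n-1)\,x\,p_{n-1}(x)=2n\,q_n(x)+(2n-1)\,q_{n-1}(x), \] and for every integer $n\ge2$, \[ (3n-2)\,x\,q_{n-1}(x)=\tfrac23\bigl(n\,p_n(x)+(2n-1)\,p_{n-1}(x)+(n-1)\,p_{n-2}(x)\bigr). \]
   Context: Pochhammer symbol: $(a)_0=1$, $(a)_n=a(a+1)\cdots(a+n-1)$; for real $a$ and integer $n\ge0$, $\binom{n+a}{n}:=\frac{(a+1)_n}{n!}$. Define $p_n(x)=\sum_{k=0}^n\binom nk\binom{n+\frac k2}{n}(-1)^{n-k}x^k$ and $q_n(x)=\sum_{k=0}^n\binom nk\binom{n+\frac{k-1}2}{n}(-1)^{n-k}x^k$. *)

From HB Require Import structures.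
From mathcomp Require Import all_boot all_order all_algebra.
Set Implicit Arguments. Unset Strict Implicit. Unset Printing Implicit Defensive.
Import Order.TTheory GRing.Theory Num.Theory.
Local Open Scope ring_scope.

Definition poch (a : rat) (n : nat) : rat := \prod_(i < n) (a + i%:R).

(* Generalized binomial: binom(n + a, n) := (a+1)_n / n!. *)
Definition gbinom (n : nat) (a : rat) : rat := poch (a + 1) n / (n`!)%:R.

Definition p_poly (n : nat) : {poly rat} :=
  \sum_(k < n.+1) ((('C(n, k))%:R * gbinom n (k%:R / 2) * (-1) ^+ (n - k)) *: 'X^k).

Definition q_poly (n : nat) : {poly rat} :=
  \sum_(k < n.+1) ((('C(n, k))%:R * gbinom n ((k%:R - 1) / 2) * (-1) ^+ (n - k)) *: 'X^k).

From HB Require Import structures.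
From mathcomp Require Import all_boot all_order all_algebra.
From mathcomp Require Import ring zify.
Import GRing.Theory Num.Theory.
Local Open Scope ring_scope.

(* Compare coefficients.  The k-th coefficient of p_n (resp. q_n) is
   (-1)^(n+k) C(n,k) binom(n+a, n) with a = k/2 (resp. a = (k-1)/2); the sign
   is written with n+k rather than n-k to avoid truncated subtraction when
   indices shift.  The recursions
     binom(n+1+a, n+1) = binom(n+a, n) (a+n+1)/(n+1),
     binom(n+1+a, n+1) = (a+1)/(n+1) binom(n+a+1, n),
   Pascal's rule and the ratios of neighbouring binomial coefficients express
   all coefficients of a recurrence through a single one, leaving an identity
   of rational functions in n and k. *)

Lemma coef_binomial_signed_sum {R : nzRingType} n (c : nat -> R) k :
  (\sum_(i < n.+1) ('C(n, i)%:R * c i * (-1) ^+ (n - i)) *: 'X^i)`_k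
  = 'C(n, k)%:R * c k * (-1) ^+ (n + k).
Proof.
rewrite -(poly_def _ (fun i => 'C(n, i)%:R * c i * (-1) ^+ (n - i))) coef_poly.
case: ltnP => [|lt_n_k]; last by rewrite bin_small // !mul0r.
rewrite ltnS => le_k_n; congr (_ * _).
by rewrite -{2}(subnK le_k_n) -addnA addnn -muln2 exprD exprM sqrr_sign mulr1.
Qed.

Lemma coef_p_poly n k :
  (p_poly n)`_k = 'C(n, k)%:R * gbinom n (k%:R / 2) * (-1) ^+ (n + k).
Proof. exact: (coef_binomial_signed_sum n (fun i => gbinom n (i%:R / 2))). Qed.

Lemma coef_q_poly n k :
  (q_poly n)`_k = 'C(n, k)%:R * gbinom n ((k%:R - 1) / 2) * (-1) ^+ (n + k).
Proof. exact: (coef_binomial_signed_sum n (fun i => gbinom n ((i%:R - 1) / 2))). Qed.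

Lemma natr_binS_div (R : numFieldType) n k :
  'C(n, k.+1)%:R = (n%:R - k%:R) / k.+1%:R * 'C(n, k)%:R :> R.
Proof.
case: (leqP k n) => [le_k_n | lt_n_k].
  by rewrite mulrAC -natrB // -natrM -mul_bin_left natrM mulrC mulKf ?pnatr_eq0.
by rewrite !bin_small ?ltnS ?(ltnW lt_n_k) // mulr0.
Qed.

Lemma natr_bin_down_div (R : numFieldType) n k :
  'C(n, k.+1)%:R = (n%:R - k%:R) / n.+1%:R * 'C(n.+1, k.+1)%:R :> R.
Proof.
case: (leqP k n) => [le_k_n | lt_n_k].
  by rewrite mulrAC -natrB // -natrM -(subSS k n) -mul_bin_down natrM mulrC mulKf ?pnatr_eq0.
by rewrite !bin_small ?ltnS ?(ltnW lt_n_k) // mulr0.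
Qed.

Lemma gbinomS n a : gbinom n.+1 a = gbinom n a * (a + n.+1%:R) / n.+1%:R.
Proof.
rewrite /gbinom /poch big_ord_recr /= factS natrM -addrA nat1r.
by field; rewrite nat1r !pnatr_eq0 (gtn_eqF (fact_gt0 n)).
Qed.

Lemma gbinomSl n a : gbinom n.+1 a = (a + 1) / n.+1%:R * gbinom n (a + 1).
Proof.
rewrite /gbinom /poch big_ord_recl /= addr0 factS natrM.
rewrite (eq_bigr (fun i : 'I_n => a + 1 + 1 + i%:R)); last first.
  by move=> i _; rewrite /bump /= -nat1r !addrA.
by field; rewrite nat1r !pnatr_eq0 (gtn_eqF (fact_gt0 n)).
Qed.

Lemma mulX_p_poly n : (0 < n)%N ->
  (3 * n%:R - 1) *: ('X * p_poly n.-1)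
  = (2 * n%:R) *: q_poly n + (2 * n%:R - 1) *: q_poly n.-1.
Proof.
case: n => // m _ /=; apply/polyP => i.
rewrite coefD !coefZ coefXM !coef_p_poly !coef_q_poly.
case: i => [|j] /=.
  rewrite mulr0 !bin0 gbinomS !addn0 exprS.
  by field; rewrite nat1r pnatr_eq0.
rewrite -[j.+1%:R]natr1 addrK gbinomS binS natrD natr_binS_div addSn addnS !exprS.
by field; rewrite !nat1r !pnatr_eq0.
Qed.

Lemma mulX_q_poly n : (1 < n)%N ->
  (3 * n%:R - 2) *: ('X * q_poly n.-1)
  = (2 / 3) *: (n%:R *: p_poly n + (2 * n%:R - 1) *: p_poly n.-1
                + (n%:R - 1) *: p_poly n.-2).
Proof.
case: n => [|[|m]] // _ /=; apply/polyP => i.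
rewrite !(coefD, coefZ) coefXM !coef_p_poly coef_q_poly.
case: i => [|j] /=.
  rewrite mulr0 !bin0 !gbinomS !addn0 !exprS.
  by field; rewrite nat1r -natrD !pnatr_eq0.
have shift : (j%:R - 1) / 2 + 1 = j.+1%:R / 2 :> rat by rewrite -natr1; field.
rewrite gbinomSl shift !gbinomS (binS m.+1 j) natrD (natr_bin_down_div _ m j).
rewrite (natr_binS_div _ m.+1 j) !addSn !addnS !exprS.
by field; rewrite !nat1r -natrD !pnatr_eq0.
Qed.

Theorem mainTheorem8 :
  (forall n : nat, (1 <= n)%N ->
     ((3 * n - 1)%N%:R *: ('X * p_poly n.-1)
      = (2 * n)%N%:R *: q_poly n + (2 * n - 1)%N%:R *: q_poly n.-1 :> {poly rat}))
  /\
  (forall n : nat, (2 <= n)%N ->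
     ((3 * n - 2)%N%:R *: ('X * q_poly n.-1)
      = (2%:R / 3%:R) *: (n%:R *: p_poly n + (2 * n - 1)%N%:R *: p_poly n.-1
                          + (n - 1)%N%:R *: p_poly n.-2) :> {poly rat})).
Proof.
split=> n n_ge.
  by rewrite !natrB ?natrM; [exact: mulX_p_poly | lia..].
by rewrite !natrB ?natrM; [exact: mulX_q_poly | lia..].
Qed.
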